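(* Let \(a,b,c\) be positive integers and let \(m\) be a positive integer that is not a perfect square. Then \((a\sqrt m,\,b+c\sqrt m)\) spans \(1\) in \(\mathbb Z[\sqrt m]\) if and only if \((am,\,b^2-c^2m)\) spans \(1\) in \(\mathbb Z\), i.e. \(\gcd(am,b^2-c^2m)=1\).
   Context: \(\mathbb Z[\sqrt m]=\{u+v\sqrt m\mid u,v\in\mathbb Z\}\). For a commutative ring \(R\) with \(1\), a pair \((\alpha_1,\alpha_2)\) spans \(1\) in \(R\) if \(\lambda_1\alpha_1+\lambda_2\alpha_2=1\) for some \(\lambda_1,\lambda_2\in R\). *)

From Stdlib Require Import ZArith.
Open Scope Z_scope.

(* Z[sqrt m] = { u + v sqrt m | u v : Z }, element u + v sqrt m represented as (u, v). *)
Record Zsqrt := mkZs { re : Z ; ir : Z }.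

Definition zs_add (x y : Zsqrt) : Zsqrt := mkZs (re x + re y) (ir x + ir y).
Definition zs_mul (m : Z) (x y : Zsqrt) : Zsqrt :=
  mkZs (re x * re y + ir x * ir y * m) (re x * ir y + ir x * re y).
Definition zs_one : Zsqrt := mkZs 1 0.

Definition spans1_Zsqrt (m : Z) (al1 al2 : Zsqrt) : Prop :=
  exists l1 l2 : Zsqrt, zs_add (zs_mul m l1 al1) (zs_mul m l2 al2) = zs_one.

Definition spans1_Z (x y : Z) : Prop :=
  exists l1 l2 : Z, l1 * x + l2 * y = 1.

Definition is_square (m : Z) : Prop := exists k : Z, k * k = m.

(** With the norm [N(u + v sqrt m) = u^2 - v^2 m], which is multiplicative:
    if [l1 (a sqrt m) + l2 (b + c sqrt m) = 1] then [l2 (b + c sqrt m) = 1 - l1 a sqrt m]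
    has norm [1] modulo [a m], so [N(l2) (b^2 - c^2 m) = 1 + a m k]. Conversely, from
    [x (a m) + y (b^2 - c^2 m) = 1] take [l1 = x sqrt m] and [l2 = y (b - c sqrt m)],
    since [b + c sqrt m] times its conjugate is [b^2 - c^2 m]. *)

From Stdlib Require Import ZArith Lia.
Open Scope Z_scope.

Definition zs_conj (x : Zsqrt) : Zsqrt := mkZs (re x) (- ir x).

Definition zs_norm (m : Z) (x : Zsqrt) : Z := re x ^ 2 - ir x ^ 2 * m.

Lemma zs_normM (m : Z) (x y : Zsqrt) :
  zs_norm m (zs_mul m x y) = zs_norm m x * zs_norm m y.
Proof. destruct x as [u v], y as [u' v']; unfold zs_norm, zs_mul; cbn [re ir]; ring. Qed.

Lemma zs_norm_one_sub_mul_sqrt (m a p q : Z) :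
  zs_norm m (mkZs (1 - q * a * m) (- (p * a)))
  = 1 - (2 * q - q ^ 2 * a * m + p ^ 2 * a) * (a * m).
Proof. unfold zs_norm; cbn [re ir]; ring. Qed.

Lemma spans1_Zsqrt_norm (m a : Z) (beta : Zsqrt) :
  spans1_Zsqrt m (mkZs 0 a) beta -> spans1_Z (a * m) (zs_norm m beta).
Proof.
  intros [[p q] [l2 H]].
  assert (Hl2 : zs_mul m l2 beta = mkZs (1 - q * a * m) (- (p * a))).
  { destruct l2 as [r s], beta as [u v]; unfold zs_add, zs_mul, zs_one in *; cbn [re ir] in *.
    injection H as H1 H2; f_equal; lia. }
  exists (2 * q - q ^ 2 * a * m + p ^ 2 * a), (zs_norm m l2).
  rewrite <- zs_normM, Hl2, zs_norm_one_sub_mul_sqrt; ring.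
Qed.

Lemma spans1_norm_Zsqrt (m a : Z) (beta : Zsqrt) :
  spans1_Z (a * m) (zs_norm m beta) -> spans1_Zsqrt m (mkZs 0 a) beta.
Proof.
  intros [x [y H]].
  exists (mkZs 0 x), (zs_mul m (mkZs y 0) (zs_conj beta)).
  assert (Hconj : zs_mul m (zs_mul m (mkZs y 0) (zs_conj beta)) beta
                  = mkZs (y * zs_norm m beta) 0).
  { destruct beta as [u v]; unfold zs_mul, zs_conj, zs_norm; cbn [re ir]; f_equal; ring. }
  rewrite Hconj; unfold zs_add, zs_mul, zs_one; cbn [re ir]; f_equal; lia.
Qed.

Lemma spans1_Z_gcd (x y : Z) : spans1_Z x y <-> Z.gcd x y = 1.
Proof.
  split.
  - intros [u [v H]]; apply Z.bezout_1_gcd; exists u, v; exact H.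
  - intros H; destruct (Z.gcd_bezout x y _ H) as [u [v Huv]]; now exists u, v.
Qed.

Theorem lemma7 (a b c m : Z) (ha : 0 < a) (hb : 0 < b) (hc : 0 < c)
  (hm : 0 < m) (hsq : ~ is_square m) :
  (spans1_Zsqrt m (mkZs 0 a) (mkZs b c) <-> spans1_Z (a * m) (b ^ 2 - c ^ 2 * m))
  /\ (spans1_Z (a * m) (b ^ 2 - c ^ 2 * m) <-> Z.gcd (a * m) (b ^ 2 - c ^ 2 * m) = 1).
Proof.
  split.
  - change (b ^ 2 - c ^ 2 * m) with (zs_norm m (mkZs b c)).
    split; [apply spans1_Zsqrt_norm | apply spans1_norm_Zsqrt].
  - apply spans1_Z_gcd.
Qed.
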